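(* Suppose $\{0,1\}\subseteq\Sigma$ and let $\pi=x_1^4x_2^8x_3^9$. Then $\mathrm{TD}(\pi,\mathrm{NC}\Pi^{|\Sigma|}_{\infty,9})\le4$; specifically, the set $\{(v_1,+),(v_2,-),(v_3,-),(v_4,-)\}$ with $v_1=(01)^4(001)^8(0001)^9$, $v_2=(01)^{9!}(001)^{9!}(0001)^{9!}(00001)^{9!}$, $v_3=0^8(10^6)^80^3$, $v_4=(01)^4(001)^4(0001)^9$ is a teaching set for $\pi$ w.r.t. $\mathrm{NC}\Pi^{|\Sigma|}_{\infty,9}$.
   Context: Fix a countably infinite set $X$ of variables and an alphabet $\Sigma$ disjoint from $X$. A pattern is a nonempty finite string over $X\cup\Sigma$. A substitution is a morphism $h:(X\cup\Sigma)^*\to\Sigma^*$ fixing letters; $L(\pi)$ (erasing pattern language) is the set of all $h(\pi)$. A non-cross pattern is a constant-free pattern $x_0^{n_0}\cdots x_k^{n_k}$ with distinct variables and $n_i\ge1$; $\mathrm{NC}\Pi^z_{\infty,m}$ is the class of non-cross patterns over an alphabet of size $z$ in which every variable occurs at most $m$ times. A labelled example is $(w,\pm)$ with $w\in\Sigma^*$; a teaching set for $\pi$ w.r.t. a class $\Pi$ is a set $T$ of labelled examples consistent with $\pi$ ($w\in L(\pi)$ iff label $+$) such that every $\tau\in\Pi$ consistent with $T$ has $L(\tau)=L(\pi)$; $\mathrm{TD}(\pi,\Pi)$ is its minimum size. *)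

From mathcomp Require Import all_boot.
Set Implicit Arguments. Unset Strict Implicit. Unset Printing Implicit Defensive.

(* Variables X := nat (countably infinite); symbols of a pattern: inl x (variable) or inr a (letter). *)
Definition pattern (S : Type) := seq (nat + S).

Definition subst (S : Type) (h : nat -> seq S) (p : pattern S) : seq S :=
  flatten (map (fun s => match s with inl x => h x | inr a => [:: a] end) p).

(* erasing pattern language membership *)
Definition inL (S : Type) (p : pattern S) (w : seq S) : Prop :=
  exists h : nat -> seq S, subst h p = w.

Definition nc_pattern (S : Type) (xs ns : seq nat) : pattern S :=
  flatten [seq nseq xn.2 (@inl nat S xn.1) | xn <- zip xs ns].

(* NCPi^{|S|}_{infty,m} : non-cross patterns (constant-free, nonempty, distinct variables,
   exponents >= 1) in which every variable occurs at most m times. *)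
Definition in_NC (S : Type) (m : nat) (p : pattern S) : Prop :=
  exists xs ns : seq nat,
    [/\ xs != [::], uniq xs, size xs = size ns,
        all (fun n => (0 < n) && (n <= m)) ns & p = nc_pattern S xs ns].

(* labelled examples: (w, true) = (w,+), (w, false) = (w,-) *)
Definition consistent (S : eqType) (T : seq (seq S * bool)) (p : pattern S) : Prop :=
  forall e, e \in T -> (inL p e.1 <-> e.2 = true).

Definition teaching_set (S : eqType) (C : pattern S -> Prop) (T : seq (seq S * bool))
    (p : pattern S) : Prop :=
  consistent T p /\
  forall tau, C tau -> consistent T tau -> forall w, inL tau w <-> inL p w.

Definition TD_le (S : eqType) (C : pattern S -> Prop) (p : pattern S) (k : nat) : Prop :=
  exists T, size T <= k /\ teaching_set C T p.

Definition pw (S : Type) (u : seq S) (n : nat) : seq S := flatten (nseq n u).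

From mathcomp Require Import all_boot zify.
Set Implicit Arguments. Unset Strict Implicit. Unset Printing Implicit Defensive.

(* 1. A non-cross pattern with distinct variables and exponents ns generates
      exactly the words u1^n1 ... uk^nk ("factorizes w ns").  Factorization is decidable (factorizesb) and invariant
      under injective letter renamings, so for the words v1, v3, v4 it can be
      evaluated on their images over bool.
   2. Every exponent sequence of length >= 4 with entries dividing 9! admits
      v2 = (01)^N (001)^N (0001)^N (00001)^N, N = 9!; but pi does not: the four
      gaps 1 0^k 1 (k = 1..4) of v2 each lie inside one factor u^n (n >= 3)
      of a factorization of v2 along pi, while periodicity and the increasing
      gap sizes of v2 force a single gap size per factor (pigeonhole).
   3. Exponent 1 admits every word, in particular v3.
   4. A finite computation over the remaining exponent sequences (length <= 3,
      entries 2..9) shows that only (4, 8, 9) admits v1 but not v3 and v4. *)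

Section PowerWords.
Variable T : Type.
Implicit Types u : seq T.

Lemma pwS u n : pw u n.+1 = u ++ pw u n. Proof. by []. Qed.

Lemma pwD u a b : pw u (a + b) = pw u a ++ pw u b.
Proof. by rewrite /pw nseqD flatten_cat. Qed.

Lemma pwSr u n : pw u n.+1 = pw u n ++ u.
Proof. by rewrite -addn1 pwD /pw /= cats0. Qed.

Lemma pw_nil n : pw (@nil T) n = [::]. Proof. by elim: n. Qed.

Lemma pwM u a b : pw u (a * b) = pw (pw u a) b.
Proof. by elim: b => [|b IH]; rewrite ?muln0 // mulnS pwD IH. Qed.

Lemma size_pw u n : size (pw u n) = n * size u.
Proof. by elim: n => // n IH; rewrite pwS size_cat IH mulSn. Qed.

Lemma map_pw (T' : Type) (f : T -> T') u n : map f (pw u n) = pw (map f u) n.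
Proof. by elim: n => // n IH; rewrite !pwS map_cat IH. Qed.

Lemma pw_period d u n t : t + size u < size (pw u n) ->
  nth d (pw u n) (t + size u) = nth d (pw u n) t.
Proof.
case: n => [|n]; first by rewrite size_pw mul0n ltn0.
rewrite size_pw mulSn => H.
rewrite [in LHS]pwS [in RHS]pwSr nth_cat ltnNge leq_addl /= addnK nth_cat size_pw ifT //.
lia.
Qed.

Lemma pw_periodk d u n k t : t + k * size u < size (pw u n) ->
  nth d (pw u n) (t + k * size u) = nth d (pw u n) t.
Proof.
elim: k t => [|k IH] t H; first by rewrite mul0n addn0.
move: H; rewrite mulSn => H.
rewrite (_ : t + (size u + k * size u) = (t + k * size u) + size u); last lia.
by rewrite pw_period ?IH //; lia.
Qed.
End PowerWords.

Definition powcat (T : Type) (us : seq (seq T)) (ns : seq nat) : seq T :=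
  flatten [seq pw un.1 un.2 | un <- zip us ns].

Definition factorizes (T : Type) (w : seq T) (ns : seq nat) : Prop :=
  exists2 us, size us = size ns & w = powcat us ns.

Lemma powcat_cons (T : Type) (u : seq T) us n ns :
  powcat (u :: us) (n :: ns) = pw u n ++ powcat us ns.
Proof. by []. Qed.

Lemma powcat_nil (T : Type) (us : seq (seq T)) : powcat us [::] = [::].
Proof. by case: us. Qed.

Lemma powcat_empty (T : Type) ns : powcat (nseq (size ns) (@nil T)) ns = [::].
Proof. by elim: ns => // n ns IH; rewrite /= powcat_cons pw_nil IH. Qed.

Lemma subst_nc (T : Type) h xs ns : subst h (nc_pattern T xs ns) = powcat (map h xs) ns.
Proof.
have subst_cat p q : subst h (p ++ q) = subst h p ++ subst h q.
  by rewrite /subst map_cat flatten_cat.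
have subst_nseq x n : subst h (nseq n (@inl nat T x)) = pw (h x) n.
  by elim: n => // n IH; rewrite -[nseq _ _]cat1s subst_cat IH /subst /= cats0.
elim: xs ns => [|x xs IH] [|n ns] //.
by rewrite /nc_pattern /= -/(nc_pattern T xs ns) subst_cat subst_nseq IH.
Qed.

Lemma inL_nc (T : Type) xs ns (w : seq T) : uniq xs -> size xs = size ns ->
  inL (nc_pattern T xs ns) w <-> factorizes w ns.
Proof.
move=> Hu Hs; split=> [[h <-]|[us Hus ->]].
  by exists (map h xs); rewrite ?size_map ?subst_nc.
exists (fun x => nth [::] us (index x xs)); rewrite subst_nc; congr powcat.
apply: (@eq_from_nth _ [::]); first by rewrite size_map Hs Hus.
by move=> i; rewrite size_map => Hi; rewrite (nth_map 0) // index_uniq.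
Qed.

Lemma factorizes_one (T : Type) (w : seq T) ns : 1 \in ns -> factorizes w ns.
Proof.
elim: ns => [//|n ns IH]; rewrite inE; case: eqP => [<- _|_ /= H].
  exists (w :: nseq (size ns) [::]); first by rewrite /= size_nseq.
  by rewrite powcat_cons powcat_empty /pw /= !cats0.
have [us Hs Hw] := IH H; exists ([::] :: us); first by rewrite /= Hs.
by rewrite powcat_cons pw_nil.
Qed.

Fixpoint factorizesb (T : eqType) (w : seq T) (ns : seq nat) : bool :=
  match ns with
  | [::] => w == [::]
  | [:: n] => pw (take (size w %/ n) w) n == w
  | n :: ns' => has (fun L => (pw (take L w) n == take (n * L) w)
                              && factorizesb (drop (n * L) w) ns')
                    (iota 0 (size w %/ n).+1)
  end.

Lemma factorizesb2 (T : eqType) (w : seq T) n m ns : factorizesb w [:: n, m & ns] =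
  has (fun L => (pw (take L w) n == take (n * L) w) && factorizesb (drop (n * L) w) (m :: ns))
      (iota 0 (size w %/ n).+1).
Proof. by []. Qed.

Lemma factorizesbP (T : eqType) ns (w : seq T) : all (fun n => 0 < n) ns ->
  reflect (factorizes w ns) (factorizesb w ns).
Proof.
move=> Hpos; apply: (iffP idP).
  elim: ns w {Hpos} => [|n [|m ns] IH] w.
  - by move/eqP->; exists [::].
  - by move/eqP=> Hw; exists [:: take (size w %/ n) w] => //; rewrite /powcat /= cats0 Hw.
  rewrite factorizesb2 => /hasP[L _ /andP[/eqP Hp /IH [us Hs Hw]]].
  exists (take L w :: us); first by rewrite /= Hs.
  by rewrite powcat_cons Hp -Hw cat_take_drop.
elim: ns w Hpos => [|n ns IH] w; first by move=> _ [[|u us] //= _ ->].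
case/andP=> Hn Hall [[|u us] // Hs Hw].
have Hsz : size w = n * size u + size (powcat us ns).
  by rewrite Hw powcat_cons size_cat size_pw.
have Htk : take (size u) w = u.
  by rewrite Hw powcat_cons -(prednK Hn) pwS -catA take_size_cat.
case: ns IH Hall Hs Hw Hsz => [|m ns] IH Hall Hs Hw Hsz.
  rewrite /= (_ : size w %/ n = size u); last by rewrite Hsz powcat_nil addn0 mulnC mulnK.
  by rewrite Htk Hw powcat_cons powcat_nil cats0.
rewrite factorizesb2; apply/hasP; exists (size u).
  by rewrite mem_iota /= add0n ltnS leq_divRL // Hsz mulnC leq_addr.
rewrite Htk Hw powcat_cons take_size_cat ?size_pw // eqxx drop_size_cat ?size_pw //.
by apply: IH => //; exists us; case: Hs.
Qed.

Lemma factorizesb_map (T T' : eqType) (f : T -> T') : injective f ->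
  forall ns w, factorizesb (map f w) ns = factorizesb w ns.
Proof.
move=> Hf; have Hm : injective (map f) := inj_map Hf.
elim=> [|n [|m ns] IH] w; first by case: w.
  by rewrite /= size_map -map_take -map_pw inj_eq.
rewrite !factorizesb2 size_map; apply: eq_has => L; cbv beta.
by rewrite -!map_take -map_pw inj_eq // -map_drop IH.
Qed.

Definition encode (T : Type) (z o : T) (b : bool) : T := if b then o else z.

Lemma factorizes_encode (T : eqType) (z o : T) (wb : seq bool) ns : z != o ->
  all (fun n => 0 < n) ns -> factorizes (map (encode z o) wb) ns <-> factorizesb wb ns.
Proof.
move=> Hzo Hpos; have enc_inj : injective (encode z o).
  by move=> [] [] //= /eqP; rewrite ?(negbTE Hzo) // eq_sym (negbTE Hzo).
by rewrite -(factorizesb_map enc_inj); split=> /(factorizesbP _ Hpos).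
Qed.

Section Occurrences.
Variables (T : Type) (d : T).
Implicit Types F w A B C L R u : seq T.

Definition occurs_at F w p :=
  p + size F <= size w /\ forall t, t < size F -> nth d w (p + t) = nth d F t.

Definition occurs F w := exists p, occurs_at F w p.

Lemma occurs_at_split F w p : occurs_at F w p -> w = take p w ++ F ++ drop (p + size F) w.
Proof.
case=> Hs Hn.
have HF : take (size F) (drop p w) = F.
  apply: (@eq_from_nth _ d); first by rewrite size_takel // size_drop; lia.
  move=> t; rewrite size_takel ?size_drop; last lia.
  by move=> Ht; rewrite nth_take // nth_drop Hn.
rewrite -{1}(cat_take_drop p w); congr (_ ++ _).
by rewrite -{1}(cat_take_drop (size F) (drop p w)) HF drop_drop addnC.
Qed.

Lemma occurs_at_cat F L R : occurs_at F (L ++ F ++ R) (size L).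
Proof.
split=> [|t Ht]; first by rewrite !size_cat; lia.
by rewrite nth_cat ltnNge leq_addr /= addKn nth_cat Ht.
Qed.

Lemma occurs_at_embed F L w R s : occurs_at F w s -> occurs_at F (L ++ w ++ R) (size L + s).
Proof.
case=> Hs Hn; split=> [|t Ht]; first by rewrite !size_cat; lia.
rewrite -addnA nth_cat ltnNge leq_addr /= addKn nth_cat ifT ?Hn //; lia.
Qed.

Lemma occurs_at_catl F A R p : occurs_at F (A ++ R) p -> p + size F <= size A ->
  occurs_at F A p.
Proof. by case=> Hs Hn Hp; split=> // t Ht; rewrite -Hn // nth_cat ifT //; lia. Qed.

Lemma occurs_at_catr F A R p : occurs_at F (A ++ R) p -> size A <= p ->
  occurs_at F R (p - size A).
Proof.
case=> Hs Hn Hp; split=> [|t Ht]; first by move: Hs; rewrite size_cat; lia.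
by rewrite -Hn // nth_cat ifF; [congr nth|]; lia.
Qed.

Lemma occurs_cat3 F A B C p : occurs_at F (A ++ B ++ C) p ->
  (p + size F <= size A \/ size A <= p) ->
  (p + size F <= size A + size B \/ size A + size B <= p) ->
  [\/ occurs F A, occurs F B | occurs F C].
Proof.
move=> H [h1|h1] h2; first by apply: Or31; exists p; exact: occurs_at_catl H h1.
have H' := occurs_at_catr H h1; case: h2 => h2.
  by apply: Or32; exists (p - size A); apply: occurs_at_catl H' _; lia.
by apply: Or33; exists (p - size A - size B); apply: occurs_at_catr H' _; lia.
Qed.

Lemma occurs_pw_first F u n s : 0 < size u -> occurs_at F (pw u n) s ->
  occurs_at F (pw u n) (s %% size u).
Proof.
move=> Hm [Hs Hn]; have E := divn_eq s (size u).
set K := s %/ size u * size u in E.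
split=> [|t Ht]; first lia.
rewrite -Hn // (_ : s + t = (s %% size u + t) + s %/ size u * size u); last by rewrite -/K; lia.
by rewrite pw_periodk // -/K; lia.
Qed.

Lemma occurs_pw_shift F u n s k : occurs_at F (pw u n) s ->
  s + k * size u + size F <= size (pw u n) -> occurs_at F (pw u n) (s + k * size u).
Proof.
move=> [Hs Hn] Hb; split=> // t Ht.
rewrite -Hn // (_ : s + k * size u + t = (s + t) + k * size u); last lia.
by rewrite pw_periodk //; lia.
Qed.
End Occurrences.

Definition block (T : Type) (z o : T) k : seq T := nseq k z ++ [:: o].
Definition blocks (T : Type) (z o : T) ks : seq T := flatten (map (block z o) ks).
Definition gap (T : Type) (z o : T) a : seq T := o :: nseq a z ++ [:: o].

Definition v2_word (T : Type) (z o : T) N : seq T :=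
  pw (block z o 1) N ++ pw (block z o 2) N ++ pw (block z o 3) N ++ pw (block z o 4) N.
Definition v2_shape (N : nat) : seq nat := nseq N 1 ++ nseq N 2 ++ nseq N 3 ++ nseq N 4.

Lemma v2_word_blocks (T : Type) (z o : T) N : v2_word z o N = blocks z o (v2_shape N).
Proof. by rewrite /blocks /v2_shape !map_cat !flatten_cat !map_nseq. Qed.

Lemma size_gap (T : Type) (z o : T) a : size (gap z o a) = a.+2.
Proof. by rewrite /gap /= size_cat size_nseq addn1. Qed.

Lemma nth_gap (T : Type) (z o : T) a m : 0 < m <= a -> nth z (gap z o a) m = z.
Proof. by case: m => [//|m] /= H; rewrite nth_cat size_nseq ifT ?nth_nseq ?ifT //; lia. Qed.

Section Gaps.
Variables (T : eqType) (z o : T).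
Hypothesis zo : z != o.

Lemma nseq_o_split k r x s : nseq k z ++ o :: r = x ++ o :: s ->
  (x = nseq k z /\ r = s) \/ (exists2 x', x = nseq k z ++ o :: x' & r = x' ++ o :: s).
Proof.
elim: k r x s => [|k IH] r [|c x] s /=.
- by case=> ->; left.
- by case=> <- ->; right; exists x.
- by case=> Hz; move: zo; rewrite Hz eqxx.
- by case=> <- /IH [[-> ->]|[x' -> ->]]; [left|right; exists x'].
Qed.

Lemma nseq_o_inj a b y y' : nseq a z ++ o :: y = nseq b z ++ o :: y' -> a = b.
Proof.
elim: a b y y' => [|a IH] [|b] y y' //=; first 1 last; case=> Hz.
- by move: zo; rewrite Hz eqxx.
- by rewrite (IH _ _ _ Hz).
- by move: zo; rewrite Hz eqxx.
Qed.

(* A gap o z^a o of a block word is formed by two consecutive blocks; a is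
   the length of the second one. *)
Lemma gap_blocks ks x a y : blocks z o ks = x ++ gap z o a ++ y ->
  a = nth 0 ks (count_mem o x).+1.
Proof.
elim: ks x a y => [|k ks IH] x a y; first by case: x.
rewrite /blocks /= -/(blocks z o ks) /block -catA /gap /= => /nseq_o_split [[-> H]|[x' -> H]].
  rewrite count_nseq /= (negbTE zo) mul0n.
  case: ks H {IH} => [|k' ks] H; first by move: H; rewrite /blocks /=; case: a.
  rewrite /blocks /= -/(blocks z o ks) /block -catA /= -catA /= in H.
  exact: nseq_o_inj (esym H).
rewrite count_cat count_nseq /= (negbTE zo) eqxx mul0n /= add1n.
by apply: IH; rewrite H.
Qed.

Lemma v2_gaps_monotone N p q i j : occurs_at z (gap z o j) (v2_word z o N) p ->
  occurs_at z (gap z o i) (v2_word z o N) q -> p < q -> 0 < i -> j <= i.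
Proof.
rewrite v2_word_blocks => Hp Hq Hpq Hi.
have Ej := occurs_at_split Hp; have Ei := occurs_at_split Hq.
have shape_mono a b : a <= b -> nth 0 (v2_shape N) b != 0 ->
    nth 0 (v2_shape N) a <= nth 0 (v2_shape N) b.
  by rewrite /v2_shape !nth_cat !size_nseq !nth_nseq; do ![case: ifP => ?] => //=; lia.
rewrite (gap_blocks Ej) (gap_blocks Ei); apply: shape_mono; last by rewrite -(gap_blocks Ei) -lt0n.
have Hpv : p <= size (blocks z o (v2_shape N)) by case: Hp; rewrite size_gap; lia.
rewrite (_ : q = p + (q - p).-1.+1); last lia.
rewrite takeD count_cat.
have -> : drop p (blocks z o (v2_shape N)) =
          gap z o j ++ drop (p + size (gap z o j)) (blocks z o (v2_shape N)).
  by rewrite {1}Ej drop_size_cat // size_takel.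
rewrite /gap /= eqxx; lia.
Qed.

(* A gap of size a occurring in u^n with a full period to the right of its
   start is shorter than the period: letters at distance size u agree, while
   the gap starts with o and has z at distances 1..a. *)
Lemma gap_lt_period u n a s : 0 < size u -> occurs_at z (gap z o a) (pw u n) s ->
  s + size u < size (pw u n) -> a < size u.
Proof.
move=> Hm [Hs Hn] Hb; rewrite ltnNge; apply/negP => Hle.
have h1 := Hn 0 (ltn0Sn _); rewrite addn0 /= in h1.
have h2 := Hn (size u) (ltac:(rewrite size_gap; lia)).
rewrite nth_gap in h2; last lia.
by move: zo; rewrite -h2 pw_period // h1 eqxx.
Qed.

(* In a factor u^n (n >= 3) of v2, move the j-gap into the first period and
   the i-gap into the last one; monotonicity of gaps in v2 gives j <= i. *)
Lemma v2_power_gaps_le N L R u n i j : 3 <= n -> v2_word z o N = L ++ pw u n ++ R ->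
  0 < i -> occurs z (gap z o i) (pw u n) -> occurs z (gap z o j) (pw u n) -> j <= i.
Proof.
move=> Hn E Hi [s Hs] [t Ht].
have HP : size (pw u n) = n * size u := size_pw u n.
have H3 : 3 * size u <= n * size u by rewrite leq_mul2r Hn orbT.
have Hsb : s + i.+2 <= size (pw u n) by case: Hs; rewrite size_gap.
have Hm : 0 < size u.
  by rewrite lt0n; apply/negP => /eqP H0; move: Hsb; rewrite HP H0 muln0; lia.
have Ht0 := occurs_pw_first Hm Ht; have Ht0m := ltn_pmod t Hm.
have Hs0m := ltn_pmod s Hm.
have Him : i < size u by apply: (gap_lt_period Hm (occurs_pw_first Hm Hs)); lia.
set X := size (pw u n) - i.+2 - s.
have E2 := divn_eq X (size u); have Hr := ltn_pmod X Hm.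
have Hs1 := occurs_pw_shift (k := X %/ size u) Hs.
set KM := X %/ size u * size u in E2 Hs1.
have Hs1' : occurs_at z (gap z o i) (pw u n) (s + KM) by apply: Hs1; rewrite size_gap; lia.
have O1 := occurs_at_embed L R Ht0; have O2 := occurs_at_embed L R Hs1'.
rewrite -E in O1 O2.
by apply: (v2_gaps_monotone O1 O2 _ Hi); lia.
Qed.

Lemma v2_power_single_gap N L R u n i j : 3 <= n -> v2_word z o N = L ++ pw u n ++ R ->
  0 < i -> 0 < j -> occurs z (gap z o i) (pw u n) -> occurs z (gap z o j) (pw u n) -> i = j.
Proof.
move=> Hn E Hi Hj Oi Oj; apply/eqP; rewrite eqn_leq.
by rewrite (v2_power_gaps_le Hn E Hi Oi Oj) (v2_power_gaps_le Hn E Hj Oj Oi).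
Qed.
End Gaps.

Lemma v2_gap_occurrences (T : Type) (z o : T) N k : 1 <= k <= 4 ->
  exists p, forall r, r.+2 <= N -> occurs_at z (gap z o k) (v2_word z o N) (p + r * k.+1).
Proof.
move=> Hk.
have [L [R E]] : exists L R, v2_word z o N = L ++ pw (block z o k) N ++ R.
  rewrite /v2_word; case: k Hk => [|[|[|[|[|k]]]]] // _.
  - by exists [::]; eexists.
  - by exists (pw (block z o 1) N); eexists.
  - by exists (pw (block z o 1) N ++ pw (block z o 2) N); eexists; rewrite -catA.
  - exists (pw (block z o 1) N ++ pw (block z o 2) N ++ pw (block z o 3) N); exists [::].
    by rewrite -!catA cats0.
exists (size L + k) => r Hr.
have Ep : pw (block z o k) N =
    (pw (block z o k) r ++ nseq k z) ++ gap z o k ++ pw (block z o k) (N - r.+2).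
  rewrite {1}(_ : N = r + 2 + (N - r.+2)); last lia.
  by rewrite !pwD -!catA /pw /= -catA.
have := occurs_at_embed L R
  (occurs_at_cat z (gap z o k) (pw (block z o k) r ++ nseq k z) (pw (block z o k) (N - r.+2))).
rewrite -Ep -E size_cat size_pw size_nseq /block size_cat size_nseq addn1.
by rewrite (_ : size L + (r * k.+1 + k) = size L + k + r * k.+1) //; lia.
Qed.

(* Whenever v2 = A ++ B ++ C with N >= 6, each gap of size 1..4 lies inside
   A, B or C: of three occurrences 2(k+1) apart, one avoids both borders. *)
Lemma v2_gap_in_factor (T : Type) (z o : T) N A B C k : 6 <= N ->
  v2_word z o N = A ++ B ++ C -> 1 <= k <= 4 ->
  [\/ occurs z (gap z o k) A, occurs z (gap z o k) B | occurs z (gap z o k) C].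
Proof.
move=> HN E Hk; have [p Hp] := v2_gap_occurrences z o N Hk.
have Hsz := size_gap z o k.
have := Hp 0 ltac:(lia); have := Hp 2 ltac:(lia); have := Hp 4 ltac:(lia).
rewrite E => H4 H2 H0.
have [[c1 c2]|[[c1 c2]|[c1 c2]]] :
  let fits q := (q + k.+2 <= size A \/ size A <= q) /\
                (q + k.+2 <= size A + size B \/ size A + size B <= q) in
  fits (p + 0 * k.+1) \/ fits (p + 2 * k.+1) \/ fits (p + 4 * k.+1) by move=> /=; lia.
- by apply: occurs_cat3 H0 _ _; rewrite Hsz.
- by apply: occurs_cat3 H2 _ _; rewrite Hsz.
- by apply: occurs_cat3 H4 _ _; rewrite Hsz.
Qed.

(* v2 is not a product of three powers with exponents >= 3: it has four gap
   sizes, and each factor can host only one of them. *)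
Lemma v2_not_three_powers (T : eqType) (z o : T) N a b c : z != o -> 6 <= N ->
  3 <= a -> 3 <= b -> 3 <= c -> ~ factorizes (v2_word z o N) [:: a; b; c].
Proof.
move=> zo HN Ha Hb Hc [[|u1 [|u2 [|u3 [|? ?]]]] //= _].
rewrite /powcat /= cats0 => E.
pose factor i := nth [::] [:: pw u1 a; pw u2 b; pw u3 c] i.
have factor_pw i : i < 3 -> exists u n L R,
    [/\ 3 <= n, v2_word z o N = L ++ pw u n ++ R & factor i = pw u n].
  case: i => [|[|[|//]]] _.
  - by exists u1, a, [::], (pw u2 b ++ pw u3 c).
  - by exists u2, b, (pw u1 a), (pw u3 c).
  - by exists u3, c, (pw u1 a ++ pw u2 b), [::]; rewrite E -catA cats0.
have gap_host k : 1 <= k <= 4 -> exists2 i, i < 3 & occurs z (gap z o k) (factor i).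
  by move=> Hk; case: (v2_gap_in_factor HN E Hk) => O; [exists 0|exists 1|exists 2].
have distinct_hosts i j k l : i < 3 -> 0 < k -> 0 < l -> k != l ->
    occurs z (gap z o k) (factor i) -> occurs z (gap z o l) (factor j) -> i != j.
  move=> Hi Hk Hl Hkl Ok Ol; apply: contra Hkl => /eqP ij; rewrite -ij in Ol.
  have [u [n [L [R [Hn EL Ei]]]]] := factor_pw i Hi; rewrite Ei in Ok Ol.
  by rewrite (v2_power_single_gap zo Hn EL Hk Hl Ok Ol).
have [i1 h1 O1] := gap_host 1 isT; have [i2 h2 O2] := gap_host 2 isT.
have [i3 h3 O3] := gap_host 3 isT; have [i4 h4 O4] := gap_host 4 isT.
have := distinct_hosts _ _ 1 2 h1 isT isT isT O1 O2.
have := distinct_hosts _ _ 1 3 h1 isT isT isT O1 O3.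
have := distinct_hosts _ _ 1 4 h1 isT isT isT O1 O4.
have := distinct_hosts _ _ 2 3 h2 isT isT isT O2 O3.
have := distinct_hosts _ _ 2 4 h2 isT isT isT O2 O4.
have := distinct_hosts _ _ 3 4 h3 isT isT isT O3 O4.
lia.
Qed.

(* If every exponent divides N, v2 admits any pattern with at least four
   variables: take (z^k o)^(N / n_k) as k-th base and empty bases after. *)
Lemma v2_factorizes_long (T : Type) (z o : T) N ns : all (fun n => n %| N) ns ->
  3 < size ns -> factorizes (v2_word z o N) ns.
Proof.
case: ns => [|n1 [|n2 [|n3 [|n4 rest]]]] //= /and5P[d1 d2 d3 d4 _] _.
exists [:: pw (block z o 1) (N %/ n1), pw (block z o 2) (N %/ n2),
        pw (block z o 3) (N %/ n3), pw (block z o 4) (N %/ n4) & nseq (size rest) [::]].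
  by rewrite /= size_nseq.
by rewrite !powcat_cons powcat_empty cats0 -!pwM !divnK.
Qed.

Definition v1_word (T : Type) (z o : T) : seq T :=
  pw [:: z; o] 4 ++ pw [:: z; z; o] 8 ++ pw [:: z; z; z; o] 9.
Definition v3_word (T : Type) (z o : T) : seq T :=
  pw [:: z] 8 ++ pw (o :: pw [:: z] 6) 8 ++ pw [:: z] 3.
Definition v4_word (T : Type) (z o : T) : seq T :=
  pw [:: z; o] 4 ++ pw [:: z; z; o] 4 ++ pw [:: z; z; z; o] 9.

Definition passes (ns : seq nat) : bool :=
  [&& factorizesb (v1_word false true) ns, ~~ factorizesb (v3_word false true) ns
    & ~~ factorizesb (v4_word false true) ns].

Fixpoint all_seqs (r : seq nat) (k : nat) (P : pred (seq nat)) : bool :=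
  if k is k'.+1 then all (fun a => all_seqs r k' (fun s => P (a :: s))) r else P [::].

Lemma all_seqsP r k P s : all_seqs r k P -> size s = k -> all (fun a => a \in r) s -> P s.
Proof.
elim: k P s => [|k IH] P [|a s] //= HP [Hs] /andP[Ha Hr].
exact: (IH (fun s => P (a :: s))) (allP HP a Ha) Hs Hr.
Qed.

Lemma passes_certificate :
  all (fun k => all_seqs (iota 2 8) k (fun ns => passes ns == (ns == [:: 4; 8; 9])))
      [:: 1; 2; 3].
Proof. by vm_compute. Qed.

Lemma passes_small ns : all (fun n => 1 < n <= 9) ns -> 0 < size ns <= 3 ->
  passes ns = (ns == [:: 4; 8; 9]).
Proof.
move=> Hall Hs; have Hk : size ns \in [:: 1; 2; 3] by rewrite !inE; lia.
apply/eqP/(all_seqsP (allP passes_certificate _ Hk)) => //.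
by apply: sub_all Hall => n; rewrite mem_iota; lia.
Qed.

Lemma examples_fix_exponents (T : eqType) (z o : T) ns : z != o -> ns != [::] ->
  all (fun n => 0 < n <= 9) ns ->
  [/\ factorizes (v1_word z o) ns, ~ factorizes (v2_word z o 9`!) ns,
      ~ factorizes (v3_word z o) ns & ~ factorizes (v4_word z o) ns]
  <-> ns = [:: 4; 8; 9].
Proof.
move=> zo Hne Hall.
have Hpos : all (fun n => 0 < n) ns by apply: sub_all Hall => n /andP[].
have encodeP w : factorizes (map (encode z o) w) ns <-> factorizesb w ns.
  exact: factorizes_encode.
have -> : v1_word z o = map (encode z o) (v1_word false true) by [].
have -> : v3_word z o = map (encode z o) (v3_word false true) by [].
have -> : v4_word z o = map (encode z o) (v4_word false true) by [].
split=> [[F1 N2 N3 N4]|Ens].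
  have Hsize : size ns <= 3.
    rewrite leqNgt; apply/negP => H4; apply: N2; apply: v2_factorizes_long H4.
    by apply: sub_all Hall => n; exact: dvdn_fact.
  have Hno1 : all (fun n => 1 < n <= 9) ns.
    apply/allP => n Hn; have/andP[n0 ->] := allP Hall n Hn; rewrite andbT.
    have : n != 1 by apply/eqP => n1; apply: N3; apply: factorizes_one; rewrite -n1.
    lia.
  have Hsz : 0 < size ns <= 3 by rewrite Hsize andbT lt0n size_eq0.
  apply/eqP; rewrite -(passes_small Hno1 Hsz).
  by apply/and3P; split; [apply/encodeP|apply/negP => /encodeP|apply/negP => /encodeP].
have/and3P[P1 P3 P4] : passes ns by rewrite passes_small ?Ens.
split; [exact/encodeP| |by move/encodeP; rewrite (negbTE P3)|by move/encodeP; rewrite (negbTE P4)].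
by rewrite Ens; apply: v2_not_three_powers => //; rewrite (leq_trans _ (leq_fact 9)).
Qed.

Lemma consistent4 (T : eqType) (p : pattern T) (P : seq T -> Prop) w1 w2 w3 w4 :
  (forall w, inL p w <-> P w) ->
  consistent [:: (w1, true); (w2, false); (w3, false); (w4, false)] p <->
  [/\ P w1, ~ P w2, ~ P w3 & ~ P w4].
Proof.
move=> HP; split=> [Hc|[P1 N2 N3 N4] e].
  have ex e : e \in [:: (w1, true); (w2, false); (w3, false); (w4, false)] ->
      (P e.1 <-> e.2 = true).
    by move=> He; exact: iff_trans (iff_sym (HP e.1)) (Hc e He).
  split; first exact: (ex (w1, true) (mem_head _ _)).2.
  - by move/(ex (w2, false) ltac:(by rewrite !inE eqxx ?orbT)).
  - by move/(ex (w3, false) ltac:(by rewrite !inE eqxx ?orbT)).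
  - by move/(ex (w4, false) ltac:(by rewrite !inE eqxx ?orbT)).
rewrite !inE => /or4P[] /eqP -> /=.
- by split=> // _; exact/HP.
- by split=> // /HP.
- by split=> // /HP.
- by split=> // /HP.
Qed.

Lemma nc_teaching_set (T : eqType) m (E : seq (seq T * bool)) xs0 ns0 :
  uniq xs0 -> size xs0 = size ns0 -> xs0 != [::] -> all (fun n => 0 < n <= m) ns0 ->
  (forall xs ns, uniq xs -> size xs = size ns -> xs != [::] ->
     all (fun n => 0 < n <= m) ns -> consistent E (nc_pattern T xs ns) <-> ns = ns0) ->
  teaching_set (@in_NC T m) E (nc_pattern T xs0 ns0).
Proof.
move=> Hu0 Hs0 Hne0 Hall0 Hexp; split; first exact/(Hexp _ _ Hu0 Hs0 Hne0 Hall0).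
move=> _ [xs [ns [Hne Hu Hs Hall ->]]] /(Hexp _ _ Hu Hs Hne Hall) Ens w; subst ns.
exact: iff_trans (inL_nc w Hu Hs) (iff_sym (inL_nc w Hu0 Hs0)).
Qed.

Theorem mainTheorem13 (S : finType) (zero one : S) (h01 : zero != one) :
  let pi : pattern S := nc_pattern S [:: 1; 2; 3] [:: 4; 8; 9] in
  let v1 := pw [:: zero; one] 4 ++ pw [:: zero; zero; one] 8
            ++ pw [:: zero; zero; zero; one] 9 in
  let v2 := pw [:: zero; one] 9`! ++ pw [:: zero; zero; one] 9`!
            ++ pw [:: zero; zero; zero; one] 9`!
            ++ pw [:: zero; zero; zero; zero; one] 9`! in
  let v3 := pw [:: zero] 8 ++ pw (one :: pw [:: zero] 6) 8 ++ pw [:: zero] 3 in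
  let v4 := pw [:: zero; one] 4 ++ pw [:: zero; zero; one] 4
            ++ pw [:: zero; zero; zero; one] 9 in
  TD_le (@in_NC S 9) pi 4 /\
  teaching_set (@in_NC S 9) [:: (v1, true); (v2, false); (v3, false); (v4, false)] pi.
Proof.
move=> pi v1 v2 v3 v4.
have teach : teaching_set (@in_NC S 9)
    [:: (v1, true); (v2, false); (v3, false); (v4, false)] pi.
  apply: nc_teaching_set => // xs ns Hu Hs Hne Hall.
  apply: iff_trans (consistent4 _ _ _ _ (fun w => inL_nc w Hu Hs)) _.
  by apply: examples_fix_exponents; rewrite // -size_eq0 -Hs size_eq0.
by split=> //; exists [:: (v1, true); (v2, false); (v3, false); (v4, false)].
Qed.
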